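(* For all $\lambda,\mu>0$ and $f\in C(S_{\mathrm u})$, \[ (\lambda-\mu)\,u(R^{\mathrm{co}}_\lambda f,\mu)=u(f,\mu)-u(f,\lambda). \] Equivalently, for every $(i,j)\in\mathcal{IJ}$, \[ \int_{S_{\mathrm u}}(\lambda-\mu)R^{\mathrm{co}}_\mu R^{\mathrm{co}}_\lambda f\,\mathrm d\mathfrak p_{i,j}=\int_{S_{\mathrm u}}R^{\mathrm{co}}_\mu f\,\mathrm d\mathfrak p_{i,j}-\int_{S_{\mathrm u}}R^{\mathrm{co}}_\lambda f\,\mathrm d\mathfrak p_{i,j}. \]
   Context: Let $S_1,\dots,S_N$ be disjoint compact metrizable separable spaces and $A_i$ generators of Feller semigroups (positive contraction semigroups, not necessarily conservative) on $C(S_i)$ with resolvents $R_{\lambda,i}=(\lambda-A_i)^{-1}$. Assume $A_1,\dots,A_M$ ($1\le M\le N$) are not conservative and $A_{M+1},\dots,A_N$ are conservative. For $i\in\mathcal M=\{1,\dots,M\}$, assume the kernel of $A_i$ is trivial and there are continuous functions $\phi^{i,j}$, $j=1,\dots,\kappa(i)$, with $0\le\phi^{i,j}\le 1_{S_i}$, $\lambda R_{\lambda,i}\phi^{i,j}\le\phi^{i,j}$ for all $\lambda>0$, $\lambda R_{\lambda,i}\phi^{i,j}\neq\phi^{i,j}$, and $\sum_{j=1}^{\kappa(i)}\phi^{i,j}=1_{S_i}$. Let $\ell^{i,j}_\lambda=\phi^{i,j}-\lambda R_{\lambda,i}\phi^{i,j}$ (Laplace transforms of exit laws), and $\mathcal{IJ}=\{(i,j):i\in\mathcal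 M,\ 1\le j\le\kappa(i)\}$, $\kappa=\sum_{i\in\mathcal M}\kappa(i)$. Let $S_{\mathrm u}$ be the disjoint union of the $S_i$; functions on $S_i$ are extended by zero to $S_{\mathrm u}$, and $f_i=f1_{S_i}$. Define $R^{\mathrm{du}}_\lambda f=\sum_{i=1}^N R_{\lambda,i}f_i$. Let $\mathfrak p_{i,j}$, $(i,j)\in\mathcal{IJ}$, be Borel sub-probability measures on $S_{\mathrm u}$. Let $N_\lambda:\mathbb R^\kappa\to\mathbb R^\kappa$, $(N_\lambda w)_{i,j}=\sum_{k\in\mathcal M}\sum_{l=1}^{\kappa(k)}w_{k,l}\int_{S_k}\ell^{k,l}_\lambda\,\mathrm d\mathfrak p_{i,j}$; then $\|N_\lambda\|<1$ (max norm) and $M_\lambda=I-N_\lambda$ is invertible. For $f\in C(S_{\mathrm u})$ set $v(f,\lambda)=\big(\int_{S_{\mathrm u}}R^{\mathrm{du}}_\lambda f\,\mathrm d\mathfrak p_{i,j}\big)_{(i,j)\in\mathcal{IJ}}$, $u(f,\lambda)=M_\lambda^{-1}v(f,\lambda)$, and \[ R^{\mathrm{co}}_\lambda f=R^{\mathrm{du}}_\lambda f+\sum_{i\in\mathcal M}\sum_{j=1}^{\kappa(i)}u_{i,j}(f,\lambda)\,\ell^{i,j}_\lambda. \] It holds that $u_{i,j}(f,\lambda)=\int_{S_{\mathrm u}}R^{\mathrm{co}}_\lambda f\,\mathrm d\mathfrak p_{i,j}$. *)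

From HB Require Import structures.
From mathcomp Require Import all_boot all_order all_algebra.
From mathcomp Require Import all_classical all_reals all_analysis.
Set Implicit Arguments. Unset Strict Implicit. Unset Printing Implicit Defensive.
Import Order.TTheory GRing.Theory Num.Theory.
Import numFieldNormedType.Exports.
Local Open Scope classical_set_scope.
Local Open Scope ring_scope.

Notation borelType X := (g_sigma_algebraType (@open X)).

Section Defs.
Variables (R : realType) (X : topologicalType).

(* C(K), for a clopen piece K of the disjoint union X, viewed (extension by
   zero) as the continuous functions on X vanishing outside K. *)
Definition CK (K : set X) (f : X -> R) : Prop :=
  continuous f /\ (forall x, ~ K x -> f x = 0).

(* T is a Feller semigroup on C(K): strongly continuous semigroup of positive
   linear sup-norm contractions (not necessarily conservative). *)
Definition feller_semigroup (K : set X) (T : R -> (X -> R) -> (X -> R)) : Prop :=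
  (forall t f, 0 <= t -> CK K f -> CK K (T t f)) /\
      (forall t (a : R) f g, 0 <= t -> CK K f -> CK K g ->
         T t (fun x => a * f x + g x) = (fun x => a * T t f x + T t g x)) /\
      (forall f, CK K f -> T 0 f = f) /\
      (forall s t f, 0 <= s -> 0 <= t -> CK K f -> T (s + t) f = T s (T t f)) /\
      (forall t f, 0 <= t -> CK K f -> (forall x, 0 <= f x) ->
         forall x, 0 <= T t f x) /\
      (forall t f (c : R), 0 <= t -> CK K f -> (forall x, `|f x| <= c) ->
         forall x, `|T t f x| <= c) /\
      (forall f, CK K f -> forall e : R, 0 < e -> exists2 d : R, 0 < d &
         forall t, 0 <= t < d -> forall x, `|T t f x - f x| <= e).

Definition gen_limit (T : R -> (X -> R) -> (X -> R)) (f g : X -> R) : Prop :=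
  forall e : R, 0 < e -> exists2 d : R, 0 < d &
    forall t, 0 < t < d -> forall x, `|(T t f x - f x) / t - g x| <= e.

Definition is_generator (K : set X) (T : R -> (X -> R) -> (X -> R))
    (D : set (X -> R)) (A : (X -> R) -> (X -> R)) : Prop :=
  (forall f, D f <-> (CK K f /\ exists g, CK K g /\ gen_limit T f g)) /\
  (forall f, D f -> CK K (A f) /\ gen_limit T f (A f)).

Definition is_resolvent (K : set X) (D : set (X -> R))
    (A : (X -> R) -> (X -> R)) (Rs : R -> (X -> R) -> (X -> R)) : Prop :=
  forall lam : R, 0 < lam ->
    (forall f, CK K f -> D (Rs lam f) /\
       (fun x => lam * Rs lam f x - A (Rs lam f) x) = f) /\
    (forall g, D g -> Rs lam (fun x => lam * g x - A g x) = g).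

Definition conservative (K : set X) (T : R -> (X -> R) -> (X -> R)) : Prop :=
  forall t, 0 <= t -> T t (\1_K) = \1_K.

End Defs.

(* The index set IJ = {(i,j) : i < M, j < kappa i} (0-based indices). *)
Definition IJ (N M : nat) (kappa : 'I_N -> nat) : Type :=
  {x : {i : 'I_N & 'I_(kappa i)} | (tag x < M)%N}.
HB.instance Definition _ N M kappa := Finite.on (@IJ N M kappa).

Section Construction.
Variables (R : realType) (X : ptopologicalType) (N M : nat).
Variables (S : 'I_N -> set X) (Rs : 'I_N -> R -> (X -> R) -> (X -> R)).
Variables (kappa : 'I_N -> nat) (phi : forall i : 'I_N, 'I_(kappa i) -> X -> R).
Variable (p : IJ M kappa -> {measure set (borelType X) -> \bar R}).

Local Notation nIJ := #|{: IJ M kappa}|.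

Definition ell (ij : IJ M kappa) (lam : R) : X -> R :=
  fun x => phi (tagged (val ij)) x - lam * Rs (tag (val ij)) lam (phi (tagged (val ij))) x.

Definition Rdu (lam : R) (f : X -> R) : X -> R :=
  fun x => \sum_(i < N) Rs i lam (fun y => f y * \1_(S i) y) x.

Definition integ (ij : IJ M kappa) (g : X -> R) : R :=
  Rintegral (p ij) [set: borelType X] g.

Definition Nmat (lam : R) : 'M[R]_nIJ :=
  \matrix_(a, b) integ (enum_val a) (ell (enum_val b) lam).

Definition Mmat (lam : R) : 'M[R]_nIJ := 1%:M - Nmat lam.

Definition vvec (f : X -> R) (lam : R) : 'cV[R]_nIJ :=
  \col_a integ (enum_val a) (Rdu lam f).

Definition uvec (f : X -> R) (lam : R) : 'cV[R]_nIJ :=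
  invmx (Mmat lam) *m vvec f lam.

Definition Rco (lam : R) (f : X -> R) : X -> R :=
  fun x => Rdu lam f x + \sum_(a < nIJ) uvec f lam a ord0 * ell (enum_val a) lam x.

End Construction.

(* On each piece S_i the resolvent identity (λ-μ) R_μ R_λ = R_μ - R_λ holds,
   and applied to φ^{i,j} it gives (λ-μ) R_μ ℓ_λ = ℓ_μ - ℓ_λ.  As
   R^co_λ f = R^du_λ f + Σ u_a(f,λ) ℓ^a_λ, integrating (λ-μ) R^du_μ R^co_λ f
   against the 𝔭's yields
     (λ-μ) v(R^co_λ f, μ) = v(f,μ) - v(f,λ) + (N_μ - N_λ) u(f,λ),
   and since v(f,λ) = M_λ u(f,λ) the right-hand side is v(f,μ) - M_μ u(f,λ);
   applying M_μ^{-1} gives the claim.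
   The matrices M_λ = I - N_λ are invertible because N_λ is nonnegative with
   row sums < 1: Σ_j ℓ^{i,j}_λ = 1_{S_i} - λ R_λ 1_{S_i}, where R_λ 1_{S_i} > 0
   on S_i by the minimum principle for the generator, and compactness makes
   the bound uniform. *)

From Pilot Require Import Defs.
From HB Require Import structures.
From mathcomp Require Import all_boot all_order all_algebra.
From mathcomp Require Import all_classical all_reals all_analysis.
From mathcomp.algebra_tactics Require Import ring lra.
Import Order.TTheory GRing.Theory Num.Theory.
Import numFieldNormedType.Exports.
Local Open Scope classical_set_scope.
Local Open Scope ring_scope.

Set Implicit Arguments. Unset Strict Implicit. Unset Printing Implicit Defensive.

Section LinearOn.
Variables (T : Type) (R : pzRingType) (P : set (T -> R)).
Hypotheses (P0 : P (fun _ => 0))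
  (P_comb : forall a f g, P f -> P g -> P (fun x => a * f x + g x)).

Lemma closedD f g : P f -> P g -> P (fun x => f x + g x).
Proof.
suff -> : (fun x => f x + g x) = (fun x => 1 * f x + g x) by exact: P_comb.
by apply/funext => x; rewrite mul1r.
Qed.

Lemma closedZ a f : P f -> P (fun x => a * f x).
Proof.
suff -> : (fun x => a * f x) = (fun x => a * f x + 0) by move=> Pf; exact: P_comb.
by apply/funext => x; rewrite addr0.
Qed.

Lemma closed_sum (I : Type) (r : seq I) (g : I -> T -> R) :
  (forall i, P (g i)) -> P (fun x => \sum_(i <- r) g i x).
Proof.
move=> Pg; elim: r => [|i r IH]; first by under eq_fun do rewrite big_nil.
by under eq_fun do rewrite big_cons; exact: closedD.
Qed.

Variable L : (T -> R) -> R.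
Hypothesis L_comb :
  forall a f g, P f -> P g -> L (fun x => a * f x + g x) = a * L f + L g.

Lemma linear_on0 : L (fun _ => 0) = 0.
Proof.
have := L_comb 1 P0 P0.
have -> : (fun _ : T => 1 * 0 + 0) = (fun _ => 0 : R).
  by apply/funext => x; rewrite mul1r addr0.
by rewrite mul1r => L00; apply: (addrI (L (fun _ => 0))); rewrite addr0 -L00.
Qed.

Lemma linear_onZ a f : P f -> L (fun x => a * f x) = a * L f.
Proof.
have -> : (fun x => a * f x) = (fun x => a * f x + 0).
  by apply/funext => x; rewrite addr0.
by move=> Pf; rewrite L_comb // linear_on0 addr0.
Qed.

Lemma linear_onD f g : P f -> P g -> L (fun x => f x + g x) = L f + L g.
Proof.
have -> : (fun x => f x + g x) = (fun x => 1 * f x + g x).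
  by apply/funext => x; rewrite mul1r.
by move=> Pf Pg; rewrite L_comb // mul1r.
Qed.

Lemma linear_on_sum (I : Type) (r : seq I) (g : I -> T -> R) :
  (forall i, P (g i)) -> L (fun x => \sum_(i <- r) g i x) = \sum_(i <- r) L (g i).
Proof.
move=> Pg; elim: r => [|i r IH].
  by under eq_fun do rewrite big_nil; rewrite big_nil linear_on0.
under eq_fun do rewrite big_cons.
by rewrite linear_onD ?IH ?big_cons //; exact: closed_sum.
Qed.

Lemma linear_on_comb_sum (I : Type) (r : seq I) (c : I -> R) (g : I -> T -> R) :
  (forall i, P (g i)) ->
  L (fun x => \sum_(i <- r) c i * g i x) = \sum_(i <- r) c i * L (g i).
Proof.
move=> Pg; rewrite (@linear_on_sum I r (fun i x => c i * g i x)) => [|i].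
  by apply: eq_bigr => i _; exact: linear_onZ.
exact: closedZ.
Qed.

End LinearOn.

Lemma continuous_comb {R : realType} {X : topologicalType} (a : R) (f g : X -> R) :
  continuous f -> continuous g -> continuous (fun x => a * f x + g x).
Proof. by move=> cf cg x; exact: (continuousD (continuousM (cvg_cst a) (cf x)) (cg x)). Qed.

Lemma continuous0 {R : realType} {X : topologicalType} : continuous (fun _ : X => 0 : R).
Proof. by move=> x; exact: cvg_cst. Qed.

Lemma continuous_sum (R : realType) (X : topologicalType) (I : Type)
    (r : seq I) (g : I -> X -> R) :
  (forall i, continuous (g i)) -> continuous (fun x => \sum_(i <- r) g i x).
Proof. exact: (closed_sum (P := fun h : X -> R => continuous h) continuous0 continuous_comb). Qed.

Lemma continuous_comb_sum (R : realType) (X : topologicalType) (I : Type)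
    (r : seq I) (c : I -> R) (g : I -> X -> R) :
  (forall i, continuous (g i)) -> continuous (fun x => \sum_(i <- r) c i * g i x).
Proof.
move=> cg; apply: continuous_sum => i.
exact: (closedZ (P := fun h : X -> R => continuous h) continuous0 continuous_comb
  (c i) (cg i)).
Qed.

Section ContinuousIntegration.
Variables (R : realType) (X : ptopologicalType).
Hypothesis X_compact : compact [set: X].
Variable p : {measure set (borelType X) -> \bar R}.
Hypothesis p_fin : (p [set: borelType X] < +oo)%E.

Lemma continuous_borel_measurable (f : X -> R) :
  continuous f -> measurable_fun [set: borelType X] f.
Proof.
move=> /continuousP cf.
apply: (measurability _ (measurable_realfun.RGenOpens.measurableE R)).
move=> _ [_ [a [b ->] <-]]; apply: sub_sigma_algebra.
by rewrite setTI; apply: cf; exact: interval_open.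
Qed.

Lemma continuous_bounded (f : X -> R) : continuous f -> [bounded f x | x in [set: X]].
Proof.
move=> cf.
have /(@compact_bounded R R^o) [M [Mr HM]] : compact (f @` [set: X] : set R^o).
  by apply: continuous_compact => //; exact: continuous_subspaceT.
by exists M; split => // y My x _; apply: (HM y My); exists x.
Qed.

Lemma continuous_integrable (f : X -> R) :
  continuous f -> p.-integrable [set: borelType X] (EFin \o f).
Proof.
move=> cf; apply: measurable_bounded_integrable => //.
  exact: continuous_borel_measurable.
exact: continuous_bounded.
Qed.

Lemma Rintegral_comb (a : R) (f g : X -> R) : continuous f -> continuous g ->
  Rintegral p [set: borelType X] (fun x => a * f x + g x) =
  a * Rintegral p [set: borelType X] f + Rintegral p [set: borelType X] g.
Proof.
move=> cf cg; rewrite RintegralD ?RintegralZl //; apply: continuous_integrable => //.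
by move=> x; exact: (continuousM (cvg_cst a) (cf x)).
Qed.

Lemma Rintegral_sum (I : Type) (r : seq I) (g : I -> X -> R) :
  (forall i, continuous (g i)) ->
  Rintegral p [set: borelType X] (fun x => \sum_(i <- r) g i x) =
  \sum_(i <- r) Rintegral p [set: borelType X] (g i).
Proof. exact: (linear_on_sum (P := fun h : X -> R => continuous h) continuous0
  continuous_comb Rintegral_comb r). Qed.

Lemma Rintegral_comb_sum (I : Type) (r : seq I) (c : I -> R) (g : I -> X -> R) :
  (forall i, continuous (g i)) ->
  Rintegral p [set: borelType X] (fun x => \sum_(i <- r) c i * g i x) =
  \sum_(i <- r) c i * Rintegral p [set: borelType X] (g i).
Proof. exact: (linear_on_comb_sum (P := fun h : X -> R => continuous h) continuous0
  continuous_comb Rintegral_comb r c). Qed.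

End ContinuousIntegration.

Lemma Rintegral_lt1 (R : realType) (X : ptopologicalType)
    (p : {measure set (borelType X) -> \bar R}) (G : X -> R) :
  compact [set: X] -> (p [set: borelType X] <= 1)%E ->
  continuous G -> (forall x, G x < 1) -> Rintegral p [set: borelType X] G < 1.
Proof.
move=> X_compact p1 cG G1.
have p_fin : (p [set: borelType X] < +oo)%E by rewrite (le_lt_trans p1) ?ltry.
have p_fin_num : p [set: borelType X] \is a fin_num by rewrite ge0_fin_numE.
have [c [c1 Gc]] : exists c, c < 1 /\ forall x, G x <= c.
  have [[x0 _]|X0] := pselect (exists x : X, True); last first.
    by exists 0; split => // x; exfalso; apply: X0; exists x.
  have [x1 _ Gx1] := compact_EVT_max (ex_intro _ x0 I) X_compact
    (continuous_subspaceT cG).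
  by exists (G x1); split => // x; apply: Gx1; rewrite inE.
have f1 : fine (p [set: borelType X]) <= 1 by rewrite -lee_fin fineK.
have f0 : 0 <= fine (p [set: borelType X]) by exact: fine_ge0.
have : Rintegral p [set: borelType X] G <= Rintegral p [set: borelType X] (fun _ => c).
  apply: le_Rintegral => //; first exact: (continuous_integrable X_compact p_fin cG).
  exact/(continuous_integrable X_compact p_fin)/cst_continuous.
rewrite Rintegral_cst //.
have [c0|c0] := lerP 0 c; last by nra.
by have := ler_wpM2l c0 f1; rewrite mulr1; lra.
Qed.

Section FellerResolvent.
Variables (R : realType) (X : topologicalType).

Lemma CK0 (K : set X) : CK K (fun _ => 0 : R).
Proof. by split => //; exact: continuous0. Qed.

Lemma CK_comb (K : set X) (a : R) f g : CK K f -> CK K g ->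
  CK K (fun x => a * f x + g x).
Proof.
move=> [cf zf] [cg zg]; split; first exact: continuous_comb.
by move=> x Kx; rewrite zf // zg // mulr0 addr0.
Qed.

Lemma CK_indic (K : set X) : open K -> closed K -> CK K (\1_K : X -> R).
Proof.
move=> oK cK; split; last by move=> x Kx; rewrite indicE memNset.
move=> x; have [Kx|nKx] := pselect (K x).
  apply: (near_cst_continuous (1 : R)); rewrite openE in oK.
  by apply: filterS (oK x Kx) => y Ky; rewrite indicE mem_set.
apply: (near_cst_continuous (0 : R)).
have := closed_openC cK; rewrite openE => /(_ x nKx).
by apply: filterS => y Ky; rewrite indicE memNset.
Qed.

Lemma CK_mul_indic (K : set X) (f : X -> R) : open K -> closed K -> continuous f ->
  CK K (fun y => f y * \1_K y).
Proof.
move=> oK cK cf; have [ci zi] := CK_indic oK cK; split.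
  by move=> x; exact: (continuousM (cf x) (ci x)).
by move=> x Kx; rewrite zi // mulr0.
Qed.

Lemma gen_limit_unique (T : R -> (X -> R) -> (X -> R)) f g1 g2 :
  gen_limit T f g1 -> gen_limit T f g2 -> g1 = g2.
Proof.
move=> lim1 lim2; apply/funext => x; apply/eqP; rewrite -subr_eq0 -normr_le0.
apply/ler_addgt0Pr => e e0; rewrite add0r.
have e2 : 0 < e / 2 by lra.
have [d1 d10 H1] := lim1 _ e2; have [d2 d20 H2] := lim2 _ e2.
pose t := Num.min d1 d2 / 2.
have t0 : 0 < t by rewrite divr_gt0 // lt_min d10 d20.
have /andP[td1 td2] : (t < d1) && (t < d2).
  by rewrite -lt_min /t ltr_pdivrMr // ltr_pMr ?lt_min ?d10 ?d20 //; lra.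
have {H1} := H1 t; rewrite t0 td1 => /(_ isT x) H1.
have {H2} := H2 t; rewrite t0 td2 => /(_ isT x) H2.
set q := (T t f x - f x) / t in H1 H2.
have -> : g1 x - g2 x = - (q - g1 x) + (q - g2 x) by ring.
by apply: (le_trans (ler_normD _ _)); rewrite normrN; lra.
Qed.

Variables (K : set X) (T : R -> (X -> R) -> (X -> R)) (D : set (X -> R))
  (A : (X -> R) -> (X -> R)) (Rs : R -> (X -> R) -> (X -> R)).
Hypotheses (hT : feller_semigroup K T) (hA : is_generator K T D A)
  (hR : is_resolvent K D A Rs).

Lemma gen_limit_comb (a : R) f g Af Ag : CK K f -> CK K g ->
  gen_limit T f Af -> gen_limit T g Ag ->
  gen_limit T (fun x => a * f x + g x) (fun x => a * Af x + Ag x).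
Proof.
case: hT => _ [T_comb _] Cf Cg limf limg e e0.
have e1 : 0 < e / (2 * (`|a| + 1)).
  by apply: divr_gt0 => //; rewrite mulr_gt0 // ltr_wpDl.
have e2 : 0 < e / 2 by lra.
have [d1 d10 H1] := limf _ e1; have [d2 d20 H2] := limg _ e2.
exists (Num.min d1 d2); first by rewrite lt_min d10 d20.
move=> t /andP[t0]; rewrite lt_min => /andP[td1 td2] x.
rewrite (T_comb t a f g (ltW t0) Cf Cg).
have {H1} := H1 t; rewrite t0 td1 => /(_ isT x) H1.
have {H2} := H2 t; rewrite t0 td2 => /(_ isT x) H2.
set q1 := (T t f x - f x) / t - Af x in H1.
set q2 := (T t g x - g x) / t - Ag x in H2.
have -> : (a * T t f x + T t g x - (a * f x + g x)) / t - (a * Af x + Ag x)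
    = a * q1 + q2 by rewrite /q1 /q2; ring.
apply: (le_trans (ler_normD _ _)); rewrite normrM.
have : `|a| * `|q1| <= `|a| * (e / (2 * (`|a| + 1))) by exact: ler_wpM2l.
have : `|a| * (e / (2 * (`|a| + 1))) <= e / 2.
  rewrite mulrA ler_pdivrMr ?mulr_gt0 ?ltr_wpDl //.
  by have := normr_ge0 a; nra.
lra.
Qed.

Lemma dom_CK f : D f -> CK K f.
Proof. by case: hA => dom _ /dom []. Qed.

Lemma generator_comb (a : R) f g : D f -> D g ->
  D (fun x => a * f x + g x) /\
  A (fun x => a * f x + g x) = (fun x => a * A f x + A g x).
Proof.
case: hA => dom gen Df Dg.
have [CAf limf] := gen f Df; have [CAg limg] := gen g Dg.
have lim := gen_limit_comb a (dom_CK Df) (dom_CK Dg) limf limg.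
have Dfg : D (fun x => a * f x + g x).
  apply/dom; split; first exact: CK_comb (dom_CK Df) (dom_CK Dg).
  by exists (fun x => a * A f x + A g x); split => //; exact: CK_comb.
by split => //; exact: gen_limit_unique (gen _ Dfg).2 lim.
Qed.

Lemma resolvent_dom lam f : 0 < lam -> CK K f -> D (Rs lam f).
Proof. by move=> lam0 Cf; have [/(_ f Cf) []] := hR lam0. Qed.

Lemma resolventK lam f : 0 < lam -> CK K f ->
  (fun x => lam * Rs lam f x - A (Rs lam f) x) = f.
Proof. by move=> lam0 Cf; have [/(_ f Cf) []] := hR lam0. Qed.

Lemma resolvent_CK lam f : 0 < lam -> CK K f -> CK K (Rs lam f).
Proof. by move=> lam0 Cf; apply: dom_CK; exact: resolvent_dom. Qed.

Lemma resolvent_comb lam (a : R) f g : 0 < lam -> CK K f -> CK K g ->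
  Rs lam (fun x => a * f x + g x) = (fun x => a * Rs lam f x + Rs lam g x).
Proof.
move=> lam0 Cf Cg.
have [Dfg Afg] := generator_comb a (resolvent_dom lam0 Cf) (resolvent_dom lam0 Cg).
rewrite -[RHS]((hR lam0).2 _ Dfg) Afg; congr (Rs lam); apply/funext => x.
have /= <- := congr1 (fun F => F x) (resolventK lam0 Cf).
have /= <- := congr1 (fun F => F x) (resolventK lam0 Cg).
ring.
Qed.

Lemma resolvent_comb_at lam y : 0 < lam -> forall (a : R) f g, CK K f -> CK K g ->
  Rs lam (fun x => a * f x + g x) y = a * Rs lam f y + Rs lam g y.
Proof. by move=> lam0 a f g Cf Cg; rewrite resolvent_comb. Qed.

Lemma resolvent0 lam : 0 < lam -> Rs lam (fun _ => 0) = (fun _ => 0).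
Proof.
move=> lam0; apply/funext => y.
exact: (linear_on0 (L := fun h => Rs lam h y) (CK0 K) (resolvent_comb_at y lam0)).
Qed.

Lemma resolvent_sum lam (I : Type) (r : seq I) (g : I -> X -> R) :
  0 < lam -> (forall i, CK K (g i)) ->
  Rs lam (fun x => \sum_(i <- r) g i x) = (fun y => \sum_(i <- r) Rs lam (g i) y).
Proof.
move=> lam0 Cg; apply/funext => y.
exact: (linear_on_sum (L := fun h => Rs lam h y) (CK0 K) (@CK_comb K)
  (resolvent_comb_at y lam0) _ Cg).
Qed.

Lemma resolvent_identity lam mu f : 0 < lam -> 0 < mu -> CK K f ->
  forall x, (lam - mu) * Rs mu (Rs lam f) x = Rs mu f x - Rs lam f x.
Proof.
move=> lam0 mu0 Cf x.
have shift : (fun y => mu * Rs lam f y - A (Rs lam f) y) =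
    (fun y => (mu - lam) * Rs lam f y + f y).
  by apply/funext => y; have /= <- := congr1 (fun F => F y) (resolventK lam0 Cf); ring.
have CRf := resolvent_CK lam0 Cf.
have := (hR mu0).2 _ (resolvent_dom lam0 Cf).
rewrite shift resolvent_comb // => /(congr1 (fun F => F x)) /= <-.
ring.
Qed.

Lemma semigroup_ge_nonpos_min g x0 : CK K g -> (forall y, g x0 <= g y) ->
  g x0 <= 0 -> forall t, 0 <= t -> g x0 <= T t g x0.
Proof.
case: hT => _ [T_comb [_ [_ [T_pos [T_contr _]]]]] Cg gmin gx0 t t0.
have [cg zg] := Cg.
have Cabs : CK K (fun y => `|g y|).
  split => [y|y Ky]; last by rewrite zg // normr0.
  by apply: continuous_comp; [exact: cg | exact: norm_continuous].
(* T is only sub-Markovian, so instead of shifting g by a constant we split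
   g = g^+ - g^-: T g^+ >= 0, and |T g^-| <= sup g^- = - g x0.  gneg is g^-
   written in the shape accepted by CK_comb. *)
pose gneg y := 2^-1 * `|g y| + (- 2^-1 * g y + 0).
have Cneg : CK K gneg by apply: CK_comb Cabs (CK_comb _ Cg (CK0 K)).
have gpos y : 0 <= 1 * g y + gneg y.
  by rewrite /gneg; case: (lerP 0 (g y)) => h;
    [rewrite ger0_norm | rewrite ltr0_norm]; lra.
have gneg_bnd y : `|gneg y| <= - g x0.
  have := gmin y; rewrite /gneg; case: (lerP 0 (g y)) => h;
    [rewrite (ger0_norm h) | rewrite (ltr0_norm h)]; rewrite ger0_norm; lra.
have := T_pos t _ t0 (CK_comb 1 Cg Cneg) gpos x0; rewrite T_comb //=.
by have /ler_normlP [] := T_contr t gneg (- g x0) t0 Cneg gneg_bnd x0; lra.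
Qed.

Lemma generator_ge0_at_nonpos_min g x0 : D g -> (forall y, g x0 <= g y) ->
  g x0 <= 0 -> 0 <= A g x0.
Proof.
move=> Dg gmin gx0; have [_ lim] := hA.2 g Dg.
apply/ler_addgt0Pr => e e0.
have [d d0 Hd] := lim e e0; have t0 : 0 < d / 2 by lra.
have /ler_normlP [_ H] : `|(T (d / 2) g x0 - g x0) / (d / 2) - A g x0| <= e.
  by apply: Hd; rewrite t0 /=; lra.
have : 0 <= (T (d / 2) g x0 - g x0) / (d / 2).
  rewrite divr_ge0 ?(ltW t0) // subr_ge0.
  exact: semigroup_ge_nonpos_min (dom_CK Dg) gmin gx0 _ (ltW t0).
lra.
Qed.

Lemma resolvent_indic_gt0 lam x : compact [set: X] -> 0 < lam ->
  CK K (\1_K : X -> R) -> K x -> 0 < Rs lam \1_K x.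
Proof.
move=> X_compact lam0 CI Kx; set h := Rs lam \1_K.
have Dh : D h := resolvent_dom lam0 CI.
have at_min y : (forall z, h y <= h z) -> h y <= 0 -> \1_K y <= lam * h y.
  move=> ymin hy0; have := generator_ge0_at_nonpos_min Dh ymin hy0.
  by have /= := congr1 (fun F => F y) (resolventK lam0 CI); rewrite -/h; lra.
have [x0 _ x0min] := compact_EVT_min (ex_intro _ x I) X_compact
  (continuous_subspaceT (dom_CK Dh).1).
have {}x0min z : h x0 <= h z by apply: x0min; rewrite inE.
have hx0_ge0 : 0 <= h x0.
  rewrite leNgt; apply/negP => hx0.
  have := at_min x0 x0min (ltW hx0); have : lam * h x0 < 0 by rewrite pmulr_rlt0.
  have : 0 <= \1_K x0 :> R by rewrite indicE ler0n.
  lra.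
rewrite lt_neqAle (le_trans hx0_ge0 (x0min x)) andbT; apply/eqP => hx.
have xmin z : h x <= h z by rewrite -hx; exact: le_trans hx0_ge0 (x0min z).
have := at_min x xmin; rewrite -hx mulr0 indicE mem_set //=.
by move=> /(_ (lexx 0)); rewrite ler10.
Qed.

End FellerResolvent.

Lemma unitmx_1B_substochastic (R : realFieldType) n (Q : 'M[R]_n) :
  (forall i j, 0 <= Q i j) -> (forall i, \sum_j Q i j < 1) -> 1%:M - Q \in unitmx.
Proof.
(* At a coordinate b of maximal modulus, a kernel vector v of (1 - Q)^T
   satisfies |v_b| <= |v_b| * \sum_k Q b k, forcing v = 0. *)
move=> Q_ge0 Q_row; rewrite unitmxE unitfE -det_tr.
apply/negP => /det0P [v v0 vQ].
have [i0 vi0] : exists i0, v 0 i0 != 0.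
  apply/not_existsP => v_eq0; move/eqP: v0; apply; apply/matrixP => i j.
  by rewrite (ord1 i) mxE; apply/eqP/negPn/negP; exact: v_eq0.
pose b := Order.arg_max i0 xpredT (fun i => `|v 0 i|).
have bmax i : `|v 0 i| <= `|v 0 b| by rewrite /b; case: arg_maxP => //= j _; apply.
have vb : v 0 b = \sum_k v 0 k * Q b k.
  move/matrixP: vQ => /(_ 0 b); rewrite !mxE.
  under eq_bigr do rewrite !mxE mulrBr.
  rewrite sumrB (bigD1 b) //= eqxx mulr1n big1 ?addr0 => [|k /negPf]; last first.
    by rewrite eq_sym => ->; rewrite mulr0n mulr0.
  by move/eqP; rewrite mulr1 subr_eq0 => /eqP.
have : `|v 0 b| <= `|v 0 b| * \sum_k Q b k.
  rewrite {1}vb mulr_sumr; apply: (le_trans (ler_norm_sum _ _ _)).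
  apply: ler_sum => k _; rewrite normrM (ger0_norm (Q_ge0 _ _)).
  by apply: ler_wpM2r => //; exact: bmax.
have := Q_row b; have := normr_ge0 (v 0 b) => ? ? ?.
have vb0 : `|v 0 b| = 0 by nra.
by move: (bmax i0); rewrite vb0 normr_le0 (negPf vi0).
Qed.

Lemma invmx_1B_shift (F : fieldType) n (Ql Qm : 'M[F]_n) (wl wm : 'cV[F]_n) :
  1%:M - Ql \in unitmx -> 1%:M - Qm \in unitmx ->
  invmx (1%:M - Qm) *m (wm - wl + (Qm - Ql) *m (invmx (1%:M - Ql) *m wl)) =
  invmx (1%:M - Qm) *m wm - invmx (1%:M - Ql) *m wl.
Proof.
move=> Ul Um; set u := invmx (1%:M - Ql) *m wl.
have wlE : wl = u - Ql *m u by rewrite -[u in u - _]mul1mx -mulmxBl mulmxA mulmxV ?mul1mx.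
have -> : wm - wl + (Qm - Ql) *m u = wm - (1%:M - Qm) *m u.
  rewrite wlE !mulmxBl mul1mx !opprB -addrA; congr (_ + _).
  by rewrite addrC addrA subrK.
by rewrite mulmxBr mulmxA mulVmx ?mul1mx.
Qed.

Lemma sum_IJ (V : nmodType) N M (kappa : 'I_N -> nat)
    (F : {i : 'I_N & 'I_(kappa i)} -> V) :
  \sum_(b : IJ M kappa) F (val b) =
  \sum_(i < N | (i < M)%N) \sum_(j < kappa i) F (Tagged (fun i => 'I_(kappa i)) j).
Proof.
rewrite (sig_big_dep _ (fun _ => xpredT)
  (fun i (j : 'I_(kappa i)) => F (Tagged (fun i => 'I_(kappa i)) j))) /=.
rewrite (reindex_omap (val : IJ M kappa -> _) insub) => [|s /andP[sM _]];
  last by rewrite insubT.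
apply: eq_big => [b|[[i j] b] _ //].
by rewrite valK eqxx !andbT (valP b).
Qed.

Section DisjointUnion.
Variables (R : realType) (X : ptopologicalType) (N M : nat) (S : 'I_N -> set X).
Hypotheses (S_open : forall i, open (S i)) (S_closed : forall i, closed (S i))
  (S_disj : forall i j, i != j -> S i `&` S j = set0)
  (S_cover : \bigcup_(i in [set: 'I_N]) S i = [set: X]).
Variables (T : 'I_N -> R -> (X -> R) -> (X -> R)) (D : 'I_N -> set (X -> R))
  (A : 'I_N -> (X -> R) -> (X -> R)) (Rs : 'I_N -> R -> (X -> R) -> (X -> R)).
Hypotheses (hT : forall i, feller_semigroup (S i) (T i))
  (hA : forall i, is_generator (S i) (T i) (D i) (A i))
  (hR : forall i, is_resolvent (S i) (D i) (A i) (Rs i)).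

Lemma piece_exists x : exists k, S k x.
Proof. by have : [set: X] x by []; rewrite -S_cover => -[k _ Skx]; exists k. Qed.

Lemma piece_unique i j x : S i x -> S j x -> i = j.
Proof.
move=> Six Sjx; case: (eqVneq i j) => // /S_disj Sij.
by have : (S i `&` S j) x by []; rewrite Sij.
Qed.

Lemma CK_mul_indic_piece k i (g : X -> R) : CK (S k) g ->
  (fun y => g y * \1_(S i) y) = if i == k then g else (fun _ => 0).
Proof.
move=> [_ g0]; case: eqP => [->|ik]; apply/funext => y;
  have [Sky|/g0 ->] := pselect (S k y); rewrite ?mul0r //.
  by rewrite indicE mem_set // mulr1.
by rewrite indicE memNset ?mulr0 // => Siy; apply: ik; exact: piece_unique Siy Sky.
Qed.

Local Notation Rdu := (Rdu S Rs).

Lemma Rdu_continuous lam f : 0 < lam -> continuous f -> continuous (Rdu lam f).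
Proof.
move=> lam0 cf; apply: continuous_sum => i.
by have [] := resolvent_CK (hA i) (hR i) lam0 (CK_mul_indic (S_open i) (@S_closed i) cf).
Qed.

Lemma Rdu_CK k lam g : 0 < lam -> CK (S k) g -> Rdu lam g = Rs k lam g.
Proof.
move=> lam0 Cg; apply/funext => x; rewrite /Defs.Rdu.
under eq_bigr => i _ do rewrite (CK_mul_indic_piece i Cg).
rewrite (bigD1 k) //= eqxx big1 ?addr0 // => i /negPf ->.
by rewrite (resolvent0 (hT i) (hA i) (hR i) lam0).
Qed.

Lemma Rdu_comb_at lam y : 0 < lam -> forall (a : R) f g, continuous f -> continuous g ->
  Rdu lam (fun x => a * f x + g x) y = a * Rdu lam f y + Rdu lam g y.
Proof.
move=> lam0 a f g cf cg; rewrite /Defs.Rdu mulr_sumr -big_split /=.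
apply: eq_bigr => i _.
have -> : (fun x => (a * f x + g x) * \1_(S i) x) =
    (fun x => a * (f x * \1_(S i) x) + g x * \1_(S i) x).
  by apply/funext => x; ring.
by rewrite (resolvent_comb (hT i) (hA i) (hR i)) //; exact: CK_mul_indic.
Qed.

(* As in Defs, the piece index i of phi is implicit here: phi j is phi^{i,j}. *)
Variables (kappa : 'I_N -> nat) (phi : forall i : 'I_N, 'I_(kappa i) -> X -> R).
Hypotheses
  (phi_cont : forall (i : 'I_N) (j : 'I_(kappa i)), (i < M)%N -> CK (S i) (phi j))
  (phi_exc : forall (i : 'I_N) (j : 'I_(kappa i)), (i < M)%N ->
     forall lam : R, 0 < lam -> forall x, lam * Rs i lam (phi j) x <= phi j x)
  (phi_sum : forall i : 'I_N, (i < M)%N ->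
     forall x, \sum_(j < kappa i) phi j x = \1_(S i) x).

Local Notation ell := (@Defs.ell _ _ _ M Rs _ phi).

Lemma exit_law_CK (i : 'I_N) (j : 'I_(kappa i)) lam : (i < M)%N -> 0 < lam ->
  CK (S i) (fun x => phi j x - lam * Rs i lam (phi j) x).
Proof.
move=> iM lam0; have Cphi := phi_cont j iM.
have -> : (fun x => phi j x - lam * Rs i lam (phi j) x) =
    (fun x => - lam * Rs i lam (phi j) x + phi j x).
  by apply/funext => x; ring.
exact: CK_comb (resolvent_CK (hA i) (hR i) lam0 Cphi) Cphi.
Qed.

Lemma ell_CK b lam : 0 < lam -> CK (S (tag (val b))) (ell b lam).
Proof. exact: exit_law_CK (valP b). Qed.

Lemma ell_ge0 b lam x : 0 < lam -> 0 <= ell b lam x.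
Proof. by move=> lam0; rewrite subr_ge0; exact: phi_exc (valP b) _ lam0 x. Qed.

Lemma Rdu_ell b lam mu x : 0 < lam -> 0 < mu ->
  (lam - mu) * Rdu mu (ell b lam) x = ell b mu x - ell b lam x.
Proof.
move=> lam0 mu0; rewrite (Rdu_CK mu0 (ell_CK b lam0)).
set i := tag (val b); set j := tagged (val b).
have Cphi : CK (S i) (phi j) := phi_cont j (valP b).
have -> : ell b lam = (fun x => - lam * Rs i lam (phi j) x + phi j x).
  by apply/funext => y; rewrite /Defs.ell; ring.
have CRphi := resolvent_CK (hA i) (hR i) lam0 Cphi.
rewrite (resolvent_comb (hT i) (hA i) (hR i)) //= mulrDr mulrCA.
rewrite (resolvent_identity (hT i) (hA i) (hR i)) // /Defs.ell -/i -/j.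
ring.
Qed.

Lemma Rdu_sum lam y (I : Type) (r : seq I) (g : I -> X -> R) : 0 < lam ->
  (forall i, continuous (g i)) ->
  Rdu lam (fun x => \sum_(i <- r) g i x) y = \sum_(i <- r) Rdu lam (g i) y.
Proof.
move=> lam0; exact: (linear_on_sum (P := fun h : X -> R => continuous h)
  (L := fun h => Rdu lam h y) continuous0 continuous_comb (Rdu_comb_at y lam0)).
Qed.

Lemma Rdu_comb_sum lam y (I : Type) (r : seq I) (c : I -> R) (g : I -> X -> R) :
  0 < lam -> (forall i, continuous (g i)) ->
  Rdu lam (fun x => \sum_(i <- r) c i * g i x) y = \sum_(i <- r) c i * Rdu lam (g i) y.
Proof.
move=> lam0; exact: (linear_on_comb_sum (P := fun h : X -> R => continuous h)
  (L := fun h => Rdu lam h y) continuous0 continuous_comb (Rdu_comb_at y lam0)).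
Qed.

Lemma Rdu_Rdu lam mu f x : 0 < lam -> 0 < mu -> continuous f ->
  (lam - mu) * Rdu mu (Rdu lam f) x = Rdu mu f x - Rdu lam f x.
Proof.
move=> lam0 mu0 cf.
have CRf i : CK (S i) (Rs i lam (fun y => f y * \1_(S i) y)).
  exact: (resolvent_CK (hA i) (hR i) lam0 (CK_mul_indic (S_open i) (@S_closed i) cf)).
have -> : Rdu lam f = (fun y => \sum_(i < N) Rs i lam (fun z => f z * \1_(S i) z) y).
  by [].
rewrite Rdu_sum // => [|i]; last exact: (CRf i).1.
under eq_bigr => i _ do rewrite (Rdu_CK mu0 (CRf i)).
rewrite mulr_sumr /Defs.Rdu -sumrB; apply: eq_bigr => i _.
exact: (resolvent_identity (hT i) (hA i) (hR i) lam0 mu0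
  (CK_mul_indic (S_open i) (@S_closed i) cf) x).
Qed.

Variable p : IJ M kappa -> {measure set (borelType X) -> \bar R}.

Local Notation n := #|{: IJ M kappa}|.
Local Notation Rco := (Rco S Rs phi p).
Local Notation uvec := (uvec S Rs phi p).
Local Notation vvec := (vvec S Rs p).
Local Notation Nmat := (Nmat Rs phi p).

Lemma Rco_continuous lam f : 0 < lam -> continuous f -> continuous (Rco lam f).
Proof.
move=> lam0 cf; apply: (closedD (P := fun h : X -> R => continuous h) continuous_comb).
  exact: Rdu_continuous.
by apply: continuous_comb_sum => a; exact: (ell_CK _ lam0).1.
Qed.

Lemma Rdu_Rco lam mu f x : 0 < lam -> 0 < mu -> continuous f ->
  (lam - mu) * Rdu mu (Rco lam f) x = Rdu mu f x - Rdu lam f x +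
    \sum_(a < n) uvec f lam a 0 * (ell (enum_val a) mu x - ell (enum_val a) lam x).
Proof.
move=> lam0 mu0 cf.
have cell a : continuous (ell (enum_val a) lam) := (ell_CK _ lam0).1.
have -> : Rco lam f = (fun y => 1 * Rdu lam f y +
    \sum_(a < n) uvec f lam a 0 * ell (enum_val a) lam y).
  by apply/funext => y; rewrite mul1r.
rewrite Rdu_comb_at //; last exact: continuous_comb_sum.
  rewrite mul1r Rdu_comb_sum // mulrDr Rdu_Rdu // mulr_sumr; congr (_ + _).
  by apply: eq_bigr => a _; rewrite mulrCA Rdu_ell.
exact: Rdu_continuous.
Qed.

Hypotheses (X_compact : compact [set: X])
  (p_sub : forall b, (p b [set: borelType X] <= 1)%E).

Lemma p_fin b : (p b [set: borelType X] < +oo)%E.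
Proof. exact: le_lt_trans (p_sub b) (ltry 1). Qed.

Lemma ell_continuous b lam : 0 < lam -> continuous (ell b lam).
Proof. by move=> lam0; have [] := ell_CK b lam0. Qed.

Lemma vvec_Rco lam mu f : 0 < lam -> 0 < mu -> continuous f ->
  (lam - mu) *: vvec (Rco lam f) mu =
  vvec f mu - vvec f lam + (Nmat mu - Nmat lam) *m uvec f lam.
Proof.
move=> lam0 mu0 cf; apply/matrixP => a j; rewrite (ord1 j) !mxE /Defs.integ.
have int (g : X -> R) : continuous g ->
    (p (enum_val a)).-integrable [set: borelType X] (EFin \o g).
  by move=> cg; exact: (continuous_integrable X_compact (p_fin _) cg).
have cRdu nu : 0 < nu -> continuous (Rdu nu f) by move=> nu0; exact: Rdu_continuous.
have cdiff (b : 'I_n) : continuous (fun x => ell (enum_val b) mu x - ell (enum_val b) lam x).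
  by move=> x; apply: continuousB; exact: ell_continuous.
have cRdu_diff : continuous (fun x => Rdu mu f x - Rdu lam f x).
  by move=> x; apply: continuousB; exact: cRdu.
rewrite -RintegralZl //; last exact/int/Rdu_continuous/Rco_continuous.
under eq_Rintegral do rewrite Rdu_Rco //.
rewrite (RintegralD _ (int _ cRdu_diff) (int _ (continuous_comb_sum cdiff))) //.
rewrite (RintegralB _ (int _ (cRdu _ mu0)) (int _ (cRdu _ lam0))) //.
rewrite (Rintegral_comb_sum X_compact (p_fin _) _ _ cdiff).
congr (_ + _); apply: eq_bigr => b _; rewrite !mxE mulrC /Defs.integ.
by rewrite (RintegralB _ (int _ (ell_continuous mu0)) (int _ (ell_continuous lam0))).
Qed.

Lemma sum_ell_lt1 lam x : 0 < lam -> \sum_(b : IJ M kappa) ell b lam x < 1.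
Proof.
move=> lam0; rewrite (@sum_IJ _ _ M _
  (fun s => phi (tagged s) x - lam * Rs (tag s) lam (phi (tagged s)) x)) /=.
have [k Skx] := piece_exists x.
have off_piece (i : 'I_N) : (i < M)%N -> i != k ->
    \sum_(j < kappa i) (phi j x - lam * Rs i lam (phi j) x) = 0.
  move=> iM ik; apply: big1 => j _; apply: (exit_law_CK j iM lam0).2 => Six.
  by move/eqP: ik; apply; exact: piece_unique Six Skx.
have [kM|Mk] := ltnP k M; last first.
  rewrite big1 ?ltr01 // => i iM; have ik : i != k by apply: contraTneq iM => ->; rewrite -leqNgt.
  exact: off_piece iM ik.
rewrite (bigD1 k) //= [X in _ + X]big1 ?addr0 => [|i /andP[iM ik]]; last first.
  exact: off_piece.
rewrite sumrB -mulr_sumr phi_sum // indicE mem_set //.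
have -> : \sum_(j < kappa k) Rs k lam (phi j) x = Rs k lam \1_(S k) x.
  have /= <- := congr1 (fun F => F x) (resolvent_sum (hT k) (hA k) (hR k)
    (index_enum _) lam0 (fun j => phi_cont j kM)).
  by congr (Rs k lam _ x); apply/funext => y; rewrite phi_sum.
have := resolvent_indic_gt0 (hT k) (hA k) (hR k) X_compact lam0
  (@CK_indic R _ _ (S_open k) (@S_closed k)) Skx.
by move=> pos; rewrite ltrBlDr ltrDl mulr_gt0.
Qed.

Lemma Mmat_unit lam : 0 < lam -> Mmat Rs phi p lam \in unitmx.
Proof.
move=> lam0; apply: unitmx_1B_substochastic => [a b|a].
  by rewrite mxE; apply: Rintegral_ge0 => x _; exact: ell_ge0.
under eq_bigr do rewrite mxE.
rewrite -(Rintegral_sum X_compact (p_fin (enum_val a))) => [|b]; last first.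
  exact: ell_continuous.
apply: Rintegral_lt1 X_compact (p_sub _) _ _ => [|x].
  by apply: continuous_sum => b; exact: ell_continuous.
rewrite -(big_enum_val (A := {: IJ M kappa}) (fun b => ell b lam x)).
exact: sum_ell_lt1.
Qed.

Lemma uvec_Rco lam mu f : 0 < lam -> 0 < mu -> continuous f ->
  (lam - mu) *: uvec (Rco lam f) mu = uvec f mu - uvec f lam.
Proof.
move=> lam0 mu0 cf; rewrite [in LHS]/Defs.uvec scalemxAr vvec_Rco //.
by rewrite /Defs.uvec /Mmat invmx_1B_shift //; exact: Mmat_unit.
Qed.

End DisjointUnion.

Unset Implicit Arguments.

Theorem lemma2 (R : realType) (X : pseudoPMetricType R)
  (X_hausdorff : hausdorff_space X) (X_compact : compact [set: X])
  (N M : nat) (hM1 : (1 <= M)%N) (hMN : (M <= N)%N)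
  (S : 'I_N -> set X)
  (S_open : forall i, open (S i)) (S_closed : forall i, closed (S i))
  (S_disj : forall i j, i != j -> S i `&` S j = set0)
  (S_cover : \bigcup_(i in [set: 'I_N]) S i = [set: X])
  (T : 'I_N -> R -> (X -> R) -> (X -> R))
  (D : 'I_N -> set (X -> R)) (A : 'I_N -> (X -> R) -> (X -> R))
  (Rs : 'I_N -> R -> (X -> R) -> (X -> R))
  (hT : forall i, feller_semigroup (S i) (T i))
  (hA : forall i, is_generator (S i) (T i) (D i) (A i))
  (hR : forall i, is_resolvent (S i) (D i) (A i) (Rs i))
  (h_noncons : forall i : 'I_N, (i < M)%N -> ~ conservative (S i) (T i))
  (h_cons : forall i : 'I_N, (M <= i)%N -> conservative (S i) (T i))
  (h_ker : forall i : 'I_N, (i < M)%N ->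
     forall f, D i f -> A i f = (fun _ => 0) -> f = (fun _ => 0))
  (kappa : 'I_N -> nat) (phi : forall i : 'I_N, 'I_(kappa i) -> X -> R)
  (phi_cont : forall (i : 'I_N) j, (i < M)%N -> CK (S i) (phi i j))
  (phi_bnd : forall (i : 'I_N) j, (i < M)%N ->
     forall x, 0 <= phi i j x <= \1_(S i) x)
  (phi_exc : forall (i : 'I_N) j, (i < M)%N -> forall lam : R, 0 < lam ->
     forall x, lam * Rs i lam (phi i j) x <= phi i j x)
  (phi_nontriv : forall (i : 'I_N) j, (i < M)%N -> forall lam : R, 0 < lam ->
     (fun x => lam * Rs i lam (phi i j) x) <> phi i j)
  (phi_sum : forall i : 'I_N, (i < M)%N ->
     forall x, \sum_(j < kappa i) phi i j x = \1_(S i) x)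
  (p : IJ M kappa -> {measure set (borelType X) -> \bar R})
  (p_sub : forall ij, (p ij [set: borelType X] <= 1)%E) :
  forall (lam mu : R), 0 < lam -> 0 < mu -> forall f : X -> R, continuous f ->
    (lam - mu) *: uvec S Rs phi p (Rco S Rs phi p lam f) mu
    = uvec S Rs phi p f mu - uvec S Rs phi p f lam.
Proof.
move=> lam mu lam0 mu0 f cf.
exact: (uvec_Rco S_open S_closed S_disj S_cover hT hA hR phi_cont phi_exc phi_sum
  X_compact p_sub lam0 mu0 cf).
Qed.
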